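(* Let $\underline{R}$, $\underline{T}$ be $n$-tuples of bounded operators on Hilbert spaces $\mathcal{L}$, $\mathcal{M}$ respectively. Then the maximal commuting piece of $(R_1\oplus T_1,\ldots,R_n\oplus T_n)$ on $\mathcal{L}\oplus\mathcal{M}$ is $(R_1^c\oplus T_1^c,\ldots,R_n^c\oplus T_n^c)$ acting on $\mathcal{L}^c\oplus\mathcal{M}^c$, where $\mathcal{L}^c=\mathcal{L}^c(\underline{R})$, $\mathcal{M}^c=\mathcal{M}^c(\underline{T})$. The maximal commuting piece of $(R_1\otimes I,\ldots,R_n\otimes I)$ on $\mathcal{L}\otimes\mathcal{M}$ is $(R_1^c\otimes I,\ldots,R_n^c\otimes I)$ acting on $\mathcal{L}^c\otimes\mathcal{M}$.
   Context: For a tuple $\underline{R}$ on $\mathcal{L}$, $\mathcal{L}^c(\underline{R})$ is the largest closed subspace of $\mathcal{L}$ invariant under every $R_i^*$ such that $R_i^*R_j^*h=R_j^*R_i^*h$ for all $h$ in it and all $i,j$; the maximal commuting piece of $\underline{R}$ is $\underline{R}^c=(R^c_1,\ldots,R^c_n)$ with $R^c_i=P_{\mathcal{L}^c(\underline{R})}R_i|_{\mathcal{L}^c(\underline{R})}$, acting on $\mathcal{L}^c(\underline{R})$. *)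

From HB Require Import structures.
From mathcomp Require Import all_boot all_order all_algebra.
From mathcomp Require Import complex.
From mathcomp Require Import reals.
From Stdlib Require Import ClassicalEpsilon.
Set Implicit Arguments. Unset Strict Implicit. Unset Printing Implicit Defensive.
Import Order.TTheory GRing.Theory Num.Theory ComplexField.
Local Open Scope ring_scope.

Section Hilbert.
Variable R : realType.
Local Notation C := R[i].
Variable V : lmodType C.
Variable ip : V -> V -> C.  (* inner product, linear in the first slot *)

Definition is_inner : Prop :=
  [/\ (forall (a : C) (x y z : V), ip (a *: x + y) z = a * ip x z + ip y z),
      (forall x y : V, ip y x = Num.conj (ip x y)),
      (forall x : V, 0 <= ip x x) &
      (forall x : V, ip x x = 0 -> x = 0)].

Definition sqnorm (x : V) : R := complex.Re (ip x x).

Definition converges (u : nat -> V) (h : V) : Prop :=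
  forall e : R, 0 < e -> exists N : nat, forall m : nat, (N <= m)%N ->
    sqnorm (u m - h) < e.

Definition cauchy (u : nat -> V) : Prop :=
  forall e : R, 0 < e -> exists N : nat, forall m k : nat, (N <= m)%N -> (N <= k)%N ->
    sqnorm (u m - u k) < e.

Definition is_hilbert : Prop :=
  is_inner /\ forall u, cauchy u -> exists h, converges u h.

Definition is_linear_op (A : V -> V) : Prop :=
  forall (a : C) (x y : V), A (a *: x + y) = a *: A x + A y.

Definition is_bounded_op (A : V -> V) : Prop :=
  is_linear_op A /\ exists c : R, forall x, sqnorm (A x) <= c * sqnorm x.

Definition is_adjoint (A B : V -> V) : Prop :=
  forall x y, ip (A x) y = ip x (B y).

(* the adjoint A^* (chosen; unique for a bounded operator on a Hilbert space) *)
Definition adj (A : V -> V) : V -> V :=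
  epsilon (inhabits (fun x : V => x)) (fun B => is_adjoint A B).

Definition is_subspace (S : V -> Prop) : Prop :=
  S 0 /\ forall (a : C) x y, S x -> S y -> S (a *: x + y).

Definition is_closed (S : V -> Prop) : Prop :=
  forall u h, (forall m, S (u m)) -> converges u h -> S h.

Definition closed_subspace (S : V -> Prop) : Prop :=
  is_subspace S /\ is_closed S.

Definition closed_span (A : V -> Prop) : V -> Prop :=
  fun h => forall S, closed_subspace S -> (forall x, A x -> S x) -> S h.

Definition is_orth_proj (S : V -> Prop) (h p : V) : Prop :=
  S p /\ forall k, S k -> ip (h - p) k = 0.

Definition proj (S : V -> Prop) (h : V) : V :=
  epsilon (inhabits (0 : V)) (fun p => is_orth_proj S h p).

(* compression P_S A |_S  (meaningful for h in S) *)
Definition compress (S : V -> Prop) (A : V -> V) (h : V) : V := proj S (A h).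

Definition comm_admissible (n : nat) (A : 'I_n -> V -> V) (S : V -> Prop) : Prop :=
  [/\ closed_subspace S,
      (forall i h, S h -> S (adj (A i) h)) &
      (forall i j h, S h -> adj (A i) (adj (A j) h) = adj (A j) (adj (A i) h))].

Definition is_max_comm_space (n : nat) (A : 'I_n -> V -> V) (S : V -> Prop) : Prop :=
  comm_admissible A S /\ forall S', comm_admissible A S' -> forall h, S' h -> S h.

End Hilbert.

(* inner product on the orthogonal direct sum L (+) M, realised on L * M *)
Definition sum_ip (R : realType) (L M : lmodType R[i])
  (ipL : L -> L -> R[i]) (ipM : M -> M -> R[i]) (x y : L * M) : R[i] :=
  ipL x.1 y.1 + ipM x.2 y.2.

Definition sum_op (L M : Type) (A : L -> L) (B : M -> M) (x : L * M) : L * M :=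
  (A x.1, B x.2).

Definition prod_set (L M : Type) (S : L -> Prop) (T : M -> Prop) (x : L * M) : Prop :=
  S x.1 /\ T x.2.

(* (H, ipH, tp) is the Hilbert-space tensor product of (L, ipL) and (M, ipM):
   tp is bilinear, <x (x) y, x' (x) y'> = <x,x'><y,y'>, and the elementary
   tensors span a dense subspace of H. *)
Definition is_tensor_product (R : realType) (L M H : lmodType R[i])
  (ipL : L -> L -> R[i]) (ipM : M -> M -> R[i]) (ipH : H -> H -> R[i])
  (tp : L -> M -> H) : Prop :=
  [/\ is_hilbert ipH,
      (forall (a : R[i]) x x' y, tp (a *: x + x') y = a *: tp x y + tp x' y),
      (forall (a : R[i]) x y y', tp x (a *: y + y') = a *: tp x y + tp x y'),
      (forall x x' y y', ipH (tp x y) (tp x' y') = ipL x x' * ipM y y') &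
      (forall h, closed_span ipH (fun k => exists x y, k = tp x y) h)].

Definition is_tensor_id (R : realType) (L M H : lmodType R[i])
  (ipH : H -> H -> R[i]) (tp : L -> M -> H) (A : L -> L) (A' : H -> H) : Prop :=
  is_bounded_op ipH A' /\ forall x y, A' (tp x y) = tp (A x) y.

From HB Require Import structures.
From mathcomp Require Import all_boot all_order all_algebra.
From mathcomp Require Import complex reals boolp classical_sets.
From mathcomp Require Import ring lra.
From Stdlib Require Import ClassicalEpsilon.
Set Implicit Arguments. Unset Strict Implicit. Unset Printing Implicit Defensive.
Import Order.TTheory GRing.Theory Num.Theory.
Local Open Scope ring_scope.

(* If a set G is invariant under every adjoint A_i^* and the A_i^* commute on G, then
   the same holds for the closed span of G, because preimages of closed subspaces under
   bounded operators and equalisers of bounded operators are closed subspaces.  Hence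
   every such G lies in the maximal commuting piece.

   For R_i (+) T_i the adjoints are R_i^* (+) T_i^*, so L^c (+) M^c is admissible, and
   the two coordinate projections of any admissible subspace are invariant commuting
   sets, hence lie in L^c and M^c.  The projection onto L^c (+) M^c is the direct sum of
   the two projections, which gives the compression.

   For R_i (x) I the adjoints act as R_i^* (x) I on elementary tensors, so the closed
   span K of L^c (x) M is admissible.  If h lies in an admissible subspace, the vectors
   contract y h, defined by <x, contract y h> = <x (x) y, h>, form an invariant
   commuting set, hence lie in L^c.  Splitting x = P x + (x - P x), with P the
   projection onto L^c, then shows that h - P_K h is orthogonal to every x (x) y, so h
   lies in K.  Since (x - P x) (x) y is orthogonal to K, the compression of R_i (x) I
   maps x (x) y to (P R_i x) (x) y. *)

Definition is_lmap (K : pzRingType) (U W : lmodType K) (f : U -> W) : Prop :=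
  forall a x y, f (a *: x + y) = a *: f x + f y.

Section LinearMaps.
Variables (K : pzRingType) (U W : lmodType K) (f : U -> W).
Hypothesis f_lin : is_lmap f.

Lemma lmap0 : f 0 = 0.
Proof.
have := f_lin 1 0 0; rewrite scaler0 addr0 scale1r.
by rewrite -{1}[f 0]addr0 => /addrI <-.
Qed.

Lemma lmapD x y : f (x + y) = f x + f y.
Proof. by have := f_lin 1 x y; rewrite !scale1r. Qed.

Lemma lmapZ a x : f (a *: x) = a *: f x.
Proof. by have := f_lin a x 0; rewrite !addr0 lmap0 addr0. Qed.

Lemma lmapN x : f (- x) = - f x.
Proof. by rewrite -scaleN1r lmapZ scaleN1r. Qed.

Lemma lmapB x y : f (x - y) = f x - f y.
Proof. by rewrite lmapD lmapN. Qed.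

End LinearMaps.

Section Vanishing.
Variable R : realType.

(* [converges ip u h] unfolds to [vanishing (fun m => sqnorm ip (u m - h))]; the lemmas
   below are applied to it directly. *)
Definition vanishing (b : nat -> R) : Prop :=
  forall e : R, 0 < e -> exists N : nat, forall m, (N <= m)%N -> b m < e.

Lemma vanishing_inv : vanishing (fun m => m.+1%:R^-1).
Proof.
move=> e e0; have [k hk] := ltr_add_invr e0; rewrite add0r in hk.
exists k => m km; apply: le_lt_trans hk.
by rewrite lef_pV2 ?posrE ?ltr0Sn // ler_nat ltnS.
Qed.

Lemma vanishingD a b :
  vanishing a -> vanishing b -> vanishing (fun m => a m + b m).
Proof.
move=> va vb e e0; have e2 : 0 < e / 2 by rewrite divr_gt0.
have [N1 h1] := va _ e2; have [N2 h2] := vb _ e2.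
exists (N1 + N2)%N => m hm.
have := h1 m (leq_trans (leq_addr N2 N1) hm).
have := h2 m (leq_trans (leq_addl N1 N2) hm).
lra.
Qed.

Lemma vanishing_le (c : R) a b :
  0 <= c -> (forall m, a m <= c * b m) -> vanishing b -> vanishing a.
Proof.
move=> c0 hab vb e e0; have c1 : 0 < c + 1 by lra.
have [N hN] := vb _ (divr_gt0 e0 c1); exists N => m /hN hm.
have : b m * (c + 1) < e by rewrite -ltr_pdivlMr.
have := hab m; nra.
Qed.

Lemma le_of_vanishing (x y : R) b :
  vanishing b -> (forall m, x <= y + b m) -> x <= y.
Proof.
move=> vb hb; apply/ler_addgt0Pr => e e0; have [N hN] := vb e e0.
by have := hb N; have := hN N (leqnn N); lra.
Qed.

End Vanishing.

Section Modulus.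
Variable R : realType.
Local Notation C := R[i].
Local Notation "x %:C" := (real_complex R x) (format "x %:C").

Definition sqmod (z : C) : R := complex.Re (z * z^*).

Lemma sqmodE z : (sqmod z)%:C = z * z^*.
Proof.
rewrite /sqmod; have := mul_conjC_ge0 z; case: (_ * _) => a b.
by rewrite lecE /= => /andP[/eqP -> _].
Qed.

Lemma sqmod_ge0 z : 0 <= sqmod z.
Proof. by rewrite -lecR sqmodE mul_conjC_ge0. Qed.

Lemma sqmod_eq0 z : sqmod z = 0 -> z = 0.
Proof. by move=> h; apply/eqP; rewrite -mul_conjC_eq0 -sqmodE h. Qed.

Lemma sqmod_real r : sqmod r%:C = r ^+ 2.
Proof.
have rJ : (r%:C)^* = r%:C := conjc_real r.
by apply: complexI; rewrite sqmodE rJ rmorphXn /= expr2.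
Qed.

End Modulus.

(** * Inner product spaces *)

Section InnerProduct.
Variable R : realType.
Local Notation C := R[i].
Local Notation "x %:C" := (real_complex R x) (format "x %:C").
Variables (V : lmodType C) (ip : V -> V -> C).
Hypothesis ip_inner : is_inner ip.
Local Notation sq := (sqnorm ip).
Local Notation Re := (@complex.Re R).

Lemma ip_lmapl z : is_lmap (fun x => ip x z : C^o).
Proof. by case: ip_inner => ipl _ _ _ a x y; rewrite ipl. Qed.

Lemma ipC x y : ip y x = (ip x y)^*.
Proof. by case: ip_inner => _ ipc _ _; apply: ipc. Qed.

Lemma ip0l z : ip 0 z = 0.
Proof. exact: lmap0 (ip_lmapl z). Qed.
Lemma ipDl x y z : ip (x + y) z = ip x z + ip y z.
Proof. by have := lmapD (ip_lmapl z). Qed.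
Lemma ipZl a x z : ip (a *: x) z = a * ip x z.
Proof. by have := lmapZ (ip_lmapl z). Qed.
Lemma ipNl x z : ip (- x) z = - ip x z.
Proof. by have := lmapN (ip_lmapl z). Qed.
Lemma ipBl x y z : ip (x - y) z = ip x z - ip y z.
Proof. by have := lmapB (ip_lmapl z). Qed.

Lemma ip0r x : ip x 0 = 0.
Proof. by rewrite ipC ip0l conjC0. Qed.
Lemma ipDr x y z : ip x (y + z) = ip x y + ip x z.
Proof. by rewrite ipC ipDl rmorphD /= -!ipC. Qed.
Lemma ipZr a x y : ip x (a *: y) = a^* * ip x y.
Proof. by rewrite ipC ipZl rmorphM /= -ipC. Qed.
Lemma ipNr x y : ip x (- y) = - ip x y.
Proof. by rewrite ipC ipNl rmorphN /= -ipC. Qed.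
Lemma ipBr x y z : ip x (y - z) = ip x y - ip x z.
Proof. by rewrite ipDr ipNr. Qed.

Lemma ip_sqnorm x : ip x x = (sq x)%:C.
Proof.
case: ip_inner => _ _ /(_ x) + _; rewrite /sqnorm; case: (ip x x) => a b.
by rewrite lecE /= => /andP[/eqP -> _].
Qed.

Lemma sqnorm_ge0 x : 0 <= sq x.
Proof. by case: ip_inner => _ _ /(_ x) + _; rewrite ip_sqnorm lecR. Qed.

Lemma sqnorm_eq0 x : sq x = 0 -> x = 0.
Proof. by case: ip_inner => _ _ _ ipdef sx0; apply: ipdef; rewrite ip_sqnorm sx0. Qed.

Lemma ipr_inj u v : (forall x, ip x u = ip x v) -> u = v.
Proof.
move=> huv; apply/eqP; rewrite -subr_eq0; apply/eqP; apply: sqnorm_eq0.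
by apply: complexI; rewrite -ip_sqnorm ipBr huv subrr.
Qed.

Lemma sqnormN x : sq (- x) = sq x.
Proof. by rewrite /sqnorm ipNl ipNr opprK. Qed.

Lemma sqnormB x y : sq (x - y) = sq (y - x).
Proof. by rewrite -sqnormN opprB. Qed.

Lemma sqnormZ a x : sq (a *: x) = sqmod a * sq x.
Proof.
by apply: complexI; rewrite rmorphM /= sqmodE -!ip_sqnorm ipZl ipZr mulrA.
Qed.

Lemma sqnormD x y : sq (x + y) = sq x + sq y + 2 * Re (ip x y).
Proof.
apply: complexI; rewrite !rmorphD /= -!ip_sqnorm ipDl !ipDr (ipC x y).
have -> : (2 * Re (ip x y))%:C = ip x y + (ip x y)^*.
  by case: (ip x y) => a b; apply/eqP; rewrite eq_complex /=; apply/andP; split;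
    apply/eqP; ring.
ring.
Qed.

Lemma parallelogram x y : sq (x + y) + sq (x - y) = 2 * sq x + 2 * sq y.
Proof.
rewrite !sqnormD sqnormN ipNr.
have -> : Re (- ip x y) = - Re (ip x y) by case: (ip x y).
ring.
Qed.

Lemma sqnormD_le x y (t : R) :
  0 < t -> sq (x + y) <= (1 + t) * sq x + (1 + t^-1) * sq y.
Proof.
move=> t0; have h := sqnorm_ge0 (t%:C *: x - y).
rewrite sqnormD sqnormZ sqnormN sqmod_real ipNr ipZl in h.
have ReM : Re (- (t%:C * ip x y)) = - (t * Re (ip x y)).
  by case: (ip x y) => a b /=; ring.
have tV0 : 0 <= t^-1 by rewrite invr_ge0 ltW.
rewrite ReM in h; have := mulr_ge0 tV0 h.
have -> : t^-1 * (t ^+ 2 * sq x + sq y + 2 * - (t * Re (ip x y)))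
  = t * sq x + t^-1 * sq y - 2 * Re (ip x y) by field; rewrite gt_eqF.
rewrite sqnormD; lra.
Qed.

Lemma sqnormD_le2 x y : sq (x + y) <= 2 * sq x + 2 * sq y.
Proof. by have := sqnormD_le x y ltr01; rewrite invr1. Qed.

Lemma sqnorm_sub_line x y :
  sq y != 0 -> sq (x - (ip x y / (sq y)%:C) *: y) = sq x - sqmod (ip x y) / sq y.
Proof.
move=> y0; have yC : (sq y)%:C != 0.
  by apply: contraNneq y0 => /(congr1 (@complex.Re R)) /= ->.
apply: complexI; rewrite -(ip_sqnorm (x - _)) ipBl !ipBr !ipZl !ipZr (ipC x y).
have yJ : ((sq y)%:C)^* = (sq y)%:C := conjc_real (sq y).
have E : (sqmod (ip x y) / sq y)%:C = ip x y * (ip x y)^* / (sq y)%:C.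
  by rewrite rmorphM fmorphV /= sqmodE.
have J : (ip x y / (sq y)%:C)^* = (ip x y)^* / (sq y)%:C.
  by rewrite rmorphM fmorphV /= yJ.
rewrite !ip_sqnorm rmorphB /= E J.
by field.
Qed.

Lemma cauchy_schwarz x y : sqmod (ip x y) <= sq x * sq y.
Proof.
have [y0|y0] := eqVneq (sq y) 0.
  by rewrite y0 mulr0 (sqnorm_eq0 y0) ip0r /sqmod mul0r.
have sy : 0 < sq y by rewrite lt_def y0 sqnorm_ge0.
have := sqnorm_ge0 (x - (ip x y / (sq y)%:C) *: y).
by rewrite sqnorm_sub_line // subr_ge0 ler_pdivrMr.
Qed.

Lemma subspaceD S x y : is_subspace S -> S x -> S y -> S (x + y :> V).
Proof. by case=> _ Slin Sx Sy; rewrite -[x]scale1r; apply: Slin. Qed.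

Lemma subspaceZ S a x : is_subspace S -> S x -> S (a *: x :> V).
Proof. by case=> S0 Slin Sx; rewrite -[_ *: _]addr0; apply: Slin. Qed.

Lemma subspaceB S x y : is_subspace S -> S x -> S y -> S (x - y :> V).
Proof. by move=> hS Sx Sy; apply: subspaceD => //; rewrite -scaleN1r; apply: subspaceZ. Qed.

Lemma orth_proj_of_min S h p :
  is_subspace S -> S p -> (forall s, S s -> sq (h - p) <= sq (h - s)) ->
  is_orth_proj ip S h p.
Proof.
(* Moving p towards k by the coefficient w / |k|^2 lowers |h - p|^2 by |w|^2 / |k|^2. *)
move=> hS Sp pmin; split => // k Sk; set w := ip (h - p) k.
have [k0|k0] := eqVneq (sq k) 0; first by rewrite /w (sqnorm_eq0 k0) ip0r.
have sk : 0 < sq k by rewrite lt_def k0 sqnorm_ge0.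
have := pmin (p + (w / (sq k)%:C) *: k) (subspaceD hS Sp (subspaceZ _ hS Sk)).
rewrite opprD addrA sqnorm_sub_line // -/w => hle.
have : sqmod w / sq k <= 0 by lra.
rewrite ler_pdivrMr // mul0r => w0.
by apply: sqmod_eq0; apply/eqP; rewrite eq_le w0 sqmod_ge0.
Qed.

Lemma proj_unique S h p q : is_subspace S ->
  is_orth_proj ip S h p -> is_orth_proj ip S h q -> p = q.
Proof.
move=> hS [Sp hp] [Sq hq]; apply/eqP; rewrite -subr_eq0; apply/eqP.
apply: sqnorm_eq0; apply: complexI; rewrite -ip_sqnorm //.
have e : (h - q) - (h - p) = p - q by rewrite opprB addrC addrA subrK.
by rewrite -{1}e ipBl hp ?hq ?subrr //; apply: subspaceB.
Qed.

Lemma proj_eq S h p : is_subspace S -> is_orth_proj ip S h p -> proj ip S h = p.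
Proof. by move=> hS hp; apply: (proj_unique hS _ hp); apply: epsilon_spec; exists p. Qed.

Lemma bounded_op_ge0 A :
  is_bounded_op ip A -> exists2 c, 0 <= c & forall x, sq (A x) <= c * sq x.
Proof.
case=> _ [c hc]; exists `|c| => // x; apply: le_trans (hc x) _.
by rewrite ler_wpM2r ?sqnorm_ge0 ?ler_norm.
Qed.

Lemma bounded_op_comp A B :
  is_bounded_op ip A -> is_bounded_op ip B -> is_bounded_op ip (A \o B).
Proof.
move=> hA hB; split; first by move=> a x y /=; rewrite hB.1 hA.1.
have [c1 c10 h1] := bounded_op_ge0 hA; have [c2 _ h2] := bounded_op_ge0 hB.
by exists (c1 * c2) => x /=; apply: le_trans (h1 _) _; rewrite -mulrA ler_wpM2l.
Qed.

Lemma converges_ip_eq u h z w :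
  converges ip u h -> (forall m, ip (u m) z = w) -> ip h z = w.
Proof.
move=> cu hu; apply/eqP; rewrite -subr_eq0; apply/eqP; apply: sqmod_eq0.
apply/eqP; rewrite eq_le sqmod_ge0 andbT.
apply: (le_of_vanishing (b := fun m => sq z * sq (u m - h))).
  by apply: (vanishing_le (sqnorm_ge0 z) _ cu) => m.
move=> m; rewrite add0r -(hu m) -ipBl sqnormB mulrC.
exact: cauchy_schwarz.
Qed.

Lemma converges_bounded A u h : is_bounded_op ip A -> converges ip u h ->
  converges ip (fun m => A (u m)) (A h).
Proof.
move=> hA cu; have [c c0 hc] := bounded_op_ge0 hA.
by apply: (vanishing_le c0 _ cu) => m; rewrite -lmapB; [apply: hc | case: hA].
Qed.

Lemma converges_unique u a b : converges ip u a -> converges ip u b -> a = b.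
Proof.
move=> ca cb; apply/eqP; rewrite -subr_eq0; apply/eqP; apply: sqnorm_eq0.
apply/eqP; rewrite eq_le sqnorm_ge0 // andbT.
have v2 u' h' : converges ip u' h' -> vanishing (fun m => 2 * sq (u' m - h')).
  by move=> cu'; apply: (vanishing_le (ler0n _ 2) _ cu').
apply: (le_of_vanishing (vanishingD (v2 _ _ ca) (v2 _ _ cb))) => m.
rewrite add0r (sqnormB (u m) a).
by have := sqnormD_le2 (a - u m) (u m - b); rewrite addrA subrK.
Qed.

Lemma sqnorm_le_of_converges h u p d : 0 <= d -> converges ip u p ->
  (forall m, sq (h - u m) <= d + m.+1%:R^-1) -> sq (h - p) <= d.
Proof.
move=> d0 cu hu.
have le_scaled t : 0 < t -> sq (h - p) <= (1 + t) * d.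
  move=> t0; pose b m := (1 + t) * m.+1%:R^-1 + (1 + t^-1) * sq (u m - p).
  have vb : vanishing b.
    apply: vanishingD.
      by apply: (vanishing_le (c := 1 + t) _ _ (@vanishing_inv R)) => //; lra.
    by apply: (vanishing_le (c := 1 + t^-1) _ _ cu) => //; rewrite addr_ge0 // invr_ge0 ltW.
  apply: (le_of_vanishing vb) => m; rewrite /b.
  have := sqnormD_le (h - u m) (u m - p) t0; rewrite addrA subrK.
  move/le_trans; apply; rewrite addrA lerD2r -mulrDr.
  by apply: ler_wpM2l (hu m); lra.
apply/ler_addgt0Pr => e e0; have d1 : 0 < d + 1 by lra.
have := le_scaled _ (divr_gt0 e0 d1).
have : e / (d + 1) * d <= e by rewrite mulrAC ler_pdivrMr // ler_pM2l //; lra.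
nra.
Qed.

Lemma closed_span_closed G : closed_subspace ip (closed_span ip G).
Proof.
split; first split.
- by move=> S [[]].
- move=> a x y hx hy S hS hG; have Sx := hx S hS hG; have Sy := hy S hS hG.
  by case: hS => [[_ Slin] _]; apply: Slin.
- move=> u h hu cu S hS hG; have Su m : S (u m) by apply: hu.
  by case: hS => _ Scl; apply: (Scl u).
Qed.

Lemma sub_closed_span (G : V -> Prop) x : G x -> closed_span ip G x.
Proof. by move=> Gx S _; apply. Qed.

Lemma closed_span_ind G S : closed_subspace ip S -> (forall x, G x -> S x) ->
  forall x, closed_span ip G x -> S x.
Proof. by move=> hS hG x; apply. Qed.

Lemma closed_subspace_preimage A S : is_bounded_op ip A -> closed_subspace ip S ->
  closed_subspace ip (fun x => S (A x)).
Proof.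
move=> hA [[S0 Slin] Scl]; split; first split.
- by rewrite (lmap0 hA.1).
- by move=> a x y Sx Sy; rewrite hA.1; apply: Slin.
- by move=> u h hu cu; apply: (Scl _ _ hu); apply: converges_bounded.
Qed.

Lemma closed_subspace_eq A B : is_bounded_op ip A -> is_bounded_op ip B ->
  closed_subspace ip (fun x => A x = B x).
Proof.
move=> hA hB; split; first split.
- by rewrite (lmap0 hA.1) (lmap0 hB.1).
- by move=> a x y ex ey; rewrite hA.1 hB.1 ex ey.
- move=> u h hu cu; apply: (converges_unique (converges_bounded hA cu)).
  by have := converges_bounded hB cu; congr converges; apply: funext => m; rewrite hu.
Qed.

Lemma closed_subspace_orth z : closed_subspace ip (fun k => ip k z = 0).
Proof.
split; first split.
- exact: ip0l.
- by move=> a x y hx hy; rewrite ipDl ipZl hx hy mulr0 addr0.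
- by move=> u h hu cu; apply: (converges_ip_eq cu).
Qed.

Lemma closed_span_orth G z : (forall g, G g -> ip z g = 0) ->
  forall k, closed_span ip G k -> ip z k = 0.
Proof.
move=> hG k hk; rewrite ipC.
rewrite (closed_span_ind (closed_subspace_orth z) _ hk) ?conjC0 // => g /hG zg.
by rewrite ipC zg conjC0.
Qed.

Lemma sqnorm_sub_le_dist S h d s t : is_subspace S ->
  (forall v, S v -> d <= sq (h - v)) -> S s -> S t ->
  sq (s - t) <= 2 * sq (h - s) + 2 * sq (h - t) - 4 * d.
Proof.
move=> hS hd Ss St; have := parallelogram (h - s) (h - t).
have -> : (h - s) + (h - t) = (2 : C) *: (h - (2 : C)^-1 *: (s + t)).
  by rewrite scalerBr scalerA mulfV ?pnatr_eq0 // scale1r scaler_nat mulr2n opprD addrACA.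
have -> : (h - s) - (h - t) = t - s by rewrite opprB addrC addrA subrK.
have two : sqmod (2 : C) = 4.
  by rewrite -[2 : C](rmorph_nat (real_complex R)) sqmod_real expr2; ring.
rewrite sqnormZ two (sqnormB t).
by have := hd _ (subspaceZ (2 : C)^-1 hS (subspaceD hS Ss St)); lra.
Qed.

Lemma minimizing_seq_cauchy S h d u : is_subspace S ->
  (forall v, S v -> d <= sq (h - v)) -> (forall m, S (u m)) ->
  (forall m, sq (h - u m) < d + m.+1%:R^-1) -> cauchy ip u.
Proof.
move=> hS hd Su hu e e0; have e4 : 0 < e / 4 by rewrite divr_gt0.
have [N hN] := vanishing_inv e4; exists N => m k hm hk.
have := sqnorm_sub_le_dist hS hd (Su m) (Su k).
have := hu m; have := hu k; have := hN m hm; have := hN k hk.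
by move: (m.+1%:R^-1) (k.+1%:R^-1) => a b; lra.
Qed.

Lemma adj_eq A B : is_adjoint ip A B -> adj ip A = B.
Proof.
move=> hB; have hadj : is_adjoint ip A (adj ip A) by apply: epsilon_spec; exists B.
by apply: funext => y; apply: ipr_inj => x; rewrite -hadj hB.
Qed.

Lemma closed_subspace_kernel (f : V -> C) c : is_lmap (f : V -> C^o) -> 0 <= c ->
  (forall x, sqmod (f x) <= c * sq x) -> closed_subspace ip (fun x => f x = 0).
Proof.
move=> fl c0 fc; split; first split.
- exact: (lmap0 fl).
- by move=> a x y fx fy; rewrite fl fx fy scaler0 addr0.
- move=> u h hu cu; apply: sqmod_eq0; apply/eqP; rewrite eq_le sqmod_ge0 andbT.
  apply: (le_of_vanishing (vanishing_le c0 (fun m => lexx _) cu)) => m.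
  have -> : f h = f (h - u m) by rewrite (lmapB fl) hu subr0.
  by rewrite add0r -sqnormB; apply: fc.
Qed.

Hypothesis ip_complete : forall u, cauchy ip u -> exists h, converges ip u h.

Lemma dist_min_exists S h : closed_subspace ip S ->
  exists2 p, S p & forall s, S s -> sq (h - p) <= sq (h - s).
Proof.
move=> [hS Scl]; pose D r := exists2 s, S s & r = sq (h - s).
have Dlb : has_lbound D by exists 0 => _ [s _ ->]; apply: sqnorm_ge0.
have DT : has_inf D by split => //; exists (sq (h - 0)), 0 => //; case: hS.
pose d := inf D; have dle s : S s -> d <= sq (h - s) by move=> Ss; apply: (ge_inf Dlb); exists s.
have d0 : 0 <= d by apply: (lb_le_inf DT.1) => _ [s _ ->]; apply: sqnorm_ge0.
have /boolp.choice [u hu] m : exists s, S s /\ sq (h - s) < d + m.+1%:R^-1.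
  have im : 0 < m.+1%:R^-1 :> R by rewrite invr_gt0.
  by have [_ [s Ss ->] ds] := inf_adherent im DT; exists s.
have [p cp] := ip_complete
  (minimizing_seq_cauchy hS dle (fun m => (hu m).1) (fun m => (hu m).2)).
exists p; first by apply: (Scl u) => // m; apply: (hu m).1.
move=> s Ss; apply: le_trans (dle _ Ss).
by apply: (sqnorm_le_of_converges d0 cp) => m; apply/ltW/(hu m).2.
Qed.

Lemma proj_spec S h : closed_subspace ip S -> is_orth_proj ip S h (proj ip S h).
Proof.
move=> hS; apply: epsilon_spec; have [p Sp pmin] := dist_min_exists h hS.
by exists p; apply: (orth_proj_of_min hS.1 Sp pmin).
Qed.

Lemma riesz (f : V -> C) : is_lmap (f : V -> C^o) ->
  (exists2 c, 0 <= c & forall x, sqmod (f x) <= c * sq x) ->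
  exists z, forall x, f x = ip x z.
Proof.
move=> fl [c c0 fc]; have hN := closed_subspace_kernel fl c0 fc.
have [f0|/existsNP[x0 fx0]] := pselect (forall x, f x = 0).
  by exists 0 => x; rewrite f0 ip0r.
have [Np orth] := proj_spec x0 hN.
(* z0 is orthogonal to the kernel of f and f z0 != 0, so f is proportional to ip ^~ z0. *)
set z0 := x0 - proj ip _ x0 in orth.
have fz0 : f z0 != 0 by rewrite /z0 (lmapB fl) Np subr0; apply/eqP.
have z0n : ip z0 z0 != 0.
  apply: contra fz0; rewrite ip_sqnorm => /eqP z00.
  have -> : z0 = 0 by apply: sqnorm_eq0; apply: complexI.
  by rewrite (lmap0 fl).
exists ((f z0 / ip z0 z0)^* *: z0) => x; rewrite ipZr conjCK.
have Ny : f (x - (f x / f z0) *: z0) = 0.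
  rewrite (lmapB fl) (lmapZ fl); apply/eqP; rewrite subr_eq0; apply/eqP.
  exact (esym (divfK fz0 (f x))).
have := orth _ Ny; rewrite ipC => /eqP; rewrite conjC_eq0.
rewrite ipBl ipZl subr_eq0 => /eqP ->.
by field; apply/andP.
Qed.

Lemma adj_exists A : is_bounded_op ip A -> exists B, is_adjoint ip A B.
Proof.
move=> hA; have [c c0 hc] := bounded_op_ge0 hA.
have /boolp.choice [B hB] y : exists z, forall x, ip (A x) y = ip x z.
  apply: riesz => [a x x' | ]; first by rewrite hA.1 ipDl ipZl.
  exists (c * sq y) => [|x]; first by rewrite mulr_ge0 ?sqnorm_ge0.
  apply: le_trans (cauchy_schwarz _ _) _.
  by rewrite mulrAC ler_wpM2r ?sqnorm_ge0.
by exists B.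
Qed.

Lemma adjP A : is_bounded_op ip A -> is_adjoint ip A (adj ip A).
Proof. by move=> hA; apply: epsilon_spec; apply: adj_exists. Qed.

Lemma adj_bounded A : is_bounded_op ip A -> is_bounded_op ip (adj ip A).
Proof.
move=> hA; have hB := adjP hA; set B := adj ip A in hB *; split.
  move=> a y y'; apply: ipr_inj => x.
  by rewrite -hB ipDr ipZr ipDr ipZr -!hB.
have [c c0 hc] := bounded_op_ge0 hA; exists c => y.
have [By0|Byn] := eqVneq (sq (B y)) 0; first by rewrite By0 mulr_ge0 ?sqnorm_ge0.
have Bpos : 0 < sq (B y) by rewrite lt_def Byn sqnorm_ge0.
have : sq (B y) ^+ 2 <= c * sq (B y) * sq y.
  have e : (sq (B y))%:C = ip (A (B y)) y by rewrite hB ip_sqnorm.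
  rewrite -sqmod_real e; apply: le_trans (cauchy_schwarz _ _) _.
  by rewrite ler_wpM2r ?sqnorm_ge0.
have := sqnorm_ge0 y; nra.
Qed.

End InnerProduct.

(** * The maximal commuting piece *)

Section MaxCommSpace.
Variable R : realType.
Variables (V : lmodType R[i]) (ip : V -> V -> R[i]).
Hypothesis ip_inner : is_inner ip.
Hypothesis ip_complete : forall u, cauchy ip u -> exists h, converges ip u h.
Variables (n : nat) (A : 'I_n -> V -> V).
Hypothesis A_bounded : forall k, is_bounded_op ip (A k).

Lemma comm_admissible_closed_span (G : V -> Prop) :
  (forall i x, G x -> G (adj ip (A i) x)) ->
  (forall i j x, G x -> adj ip (A i) (adj ip (A j) x) = adj ip (A j) (adj ip (A i) x)) ->
  comm_admissible ip A (closed_span ip G).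
Proof.
move=> Ginv Gcomm; have adjA i := adj_bounded ip_inner ip_complete (A_bounded i).
split; first exact: closed_span_closed.
- move=> i; apply: (closed_span_ind (S := fun x => closed_span ip G (adj ip (A i) x))).
    exact: (closed_subspace_preimage ip_inner (adjA i) (closed_span_closed _ G)).
  by move=> x Gx; apply: sub_closed_span; apply: Ginv.
- move=> i j; apply: (closed_span_ind
    (S := fun x => (adj ip (A i) \o adj ip (A j)) x = (adj ip (A j) \o adj ip (A i)) x)).
    by apply: (closed_subspace_eq ip_inner); apply: (bounded_op_comp ip_inner).
  exact: Gcomm.
Qed.

Lemma sub_max_comm_space Lc (G : V -> Prop) : is_max_comm_space ip A Lc ->
  (forall i x, G x -> G (adj ip (A i) x)) ->
  (forall i j x, G x -> adj ip (A i) (adj ip (A j) x) = adj ip (A j) (adj ip (A i) x)) ->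
  forall x, G x -> Lc x.
Proof.
move=> [_ Lmax] Ginv Gcomm x Gx.
by apply: (Lmax _ (comm_admissible_closed_span Ginv Gcomm)); apply: sub_closed_span.
Qed.

End MaxCommSpace.

(** * Direct sums *)

Section DirectSumSpace.
Variable R : realType.
Variables (L M : lmodType R[i]) (ipL : L -> L -> R[i]) (ipM : M -> M -> R[i]).
Hypotheses (ipL_inner : is_inner ipL) (ipM_inner : is_inner ipM).
Local Notation sip := (sum_ip ipL ipM).

Lemma sqnorm_sum x : sqnorm sip x = sqnorm ipL x.1 + sqnorm ipM x.2.
Proof. by rewrite /sqnorm /sum_ip; case: (ipL _ _) (ipM _ _) => [? ?] [? ?]. Qed.

Lemma sum_ip_inner : is_inner sip.
Proof.
split.
- move=> a x y z; rewrite /sum_ip /= (ipDl ipL_inner) (ipDl ipM_inner).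
  by rewrite (ipZl ipL_inner) (ipZl ipM_inner) mulrDr addrACA.
- by move=> x y; rewrite /sum_ip rmorphD /= -(ipC ipL_inner) -(ipC ipM_inner).
- by move=> x; case: ipL_inner ipM_inner => _ _ geL _ [_ _ geM _]; apply: addr_ge0.
- move=> x /(congr1 (@complex.Re R)); rewrite -[complex.Re _]/(sqnorm sip x) sqnorm_sum.
  have := sqnorm_ge0 ipL_inner x.1; have := sqnorm_ge0 ipM_inner x.2 => sM sL s0.
  have xL : sqnorm ipL x.1 = 0 by lra.
  have xM : sqnorm ipM x.2 = 0 by lra.
  by case: x xL xM {sM sL s0} => x1 x2 /= /(sqnorm_eq0 ipL_inner) -> /(sqnorm_eq0 ipM_inner) ->.
Qed.

Lemma converges_fst u h : converges sip u h -> converges ipL (fun m => (u m).1) h.1.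
Proof.
apply: (vanishing_le (c := 1) ler01) => m; rewrite mul1r sqnorm_sum lerDl.
exact: sqnorm_ge0.
Qed.

Lemma converges_snd u h : converges sip u h -> converges ipM (fun m => (u m).2) h.2.
Proof.
apply: (vanishing_le (c := 1) ler01) => m; rewrite mul1r sqnorm_sum lerDr.
exact: sqnorm_ge0.
Qed.

Lemma closed_subspace_prod SL SM : closed_subspace ipL SL -> closed_subspace ipM SM ->
  closed_subspace sip (prod_set SL SM).
Proof.
move=> [[L0 Llin] Lcl] [[M0 Mlin] Mcl]; split; first split.
- by [].
- by move=> a x y [Lx Mx] [Ly My]; split; [apply: Llin | apply: Mlin].
- move=> u h hu cu; split.
    by apply: (Lcl _ _ _ (converges_fst cu)) => m; case: (hu m).
  by apply: (Mcl _ _ _ (converges_snd cu)) => m; case: (hu m).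
Qed.

Lemma adj_sum_op A B A' B' : is_adjoint ipL A A' -> is_adjoint ipM B B' ->
  adj sip (sum_op A B) = sum_op A' B'.
Proof.
by move=> hA hB; apply: (adj_eq sum_ip_inner) => x y; rewrite /sum_ip /sum_op /= hA hB.
Qed.

End DirectSumSpace.

Section DirectSum.
Variable R : realType.
Variables (L M : lmodType R[i]) (ipL : L -> L -> R[i]) (ipM : M -> M -> R[i]).
Hypotheses (HL : is_hilbert ipL) (HM : is_hilbert ipM).
Variables (n : nat) (Rop : 'I_n -> L -> L) (Top : 'I_n -> M -> M).
Hypotheses (HR : forall k, is_bounded_op ipL (Rop k))
  (HT : forall k, is_bounded_op ipM (Top k)).
Variables (Lc : L -> Prop) (Mc : M -> Prop).
Hypotheses (HLc : is_max_comm_space ipL Rop Lc) (HMc : is_max_comm_space ipM Top Mc).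
Local Notation sip := (sum_ip ipL ipM).

Let adj_sum k :
  adj sip (sum_op (Rop k) (Top k)) = sum_op (adj ipL (Rop k)) (adj ipM (Top k)).
Proof.
apply: (adj_sum_op HL.1 HM.1).
  exact: (adjP HL.1 HL.2 (HR k)).
exact: (adjP HM.1 HM.2 (HT k)).
Qed.

Lemma max_comm_space_sum :
  is_max_comm_space sip (fun k => sum_op (Rop k) (Top k)) (prod_set Lc Mc).
Proof.
have [[LcS Linv Lcomm] _] := HLc; have [[McS Minv Mcomm] _] := HMc.
split.
  split; first exact: (closed_subspace_prod HL.1 HM.1 LcS McS).
  - by move=> i h [h1 h2]; rewrite adj_sum /prod_set /=; split; [apply: Linv | apply: Minv].
  - by move=> i j h [h1 h2]; rewrite !adj_sum /sum_op /= Lcomm // Mcomm.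
move=> S' [_ Sinv Scomm] [a b] Sab; rewrite /prod_set /=; split.
- apply: (sub_max_comm_space HL.1 HL.2 HR HLc (G := fun a => exists b, S' (a, b))).
  + move=> i a' [b' Sab']; exists (adj ipM (Top i) b').
    by have := Sinv i _ Sab'; rewrite adj_sum.
  + by move=> i j a' [b' Sab']; have := Scomm i j _ Sab'; rewrite !adj_sum; case.
  + by exists b.
- apply: (sub_max_comm_space HM.1 HM.2 HT HMc (G := fun b => exists a, S' (a, b))).
  + move=> i b' [a' Sab']; exists (adj ipL (Rop i) a').
    by have := Sinv i _ Sab'; rewrite adj_sum.
  + by move=> i j b' [a' Sab']; have := Scomm i j _ Sab'; rewrite !adj_sum; case.
  + by exists a.
Qed.

Lemma compress_sum k x y :
  compress sip (prod_set Lc Mc) (sum_op (Rop k) (Top k)) (x, y)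
  = sum_op (compress ipL Lc (Rop k)) (compress ipM Mc (Top k)) (x, y).
Proof.
have [[LcS _ _] _] := HLc; have [[McS _ _] _] := HMc.
apply: (proj_eq (sum_ip_inner HL.1 HM.1)).
  exact: (closed_subspace_prod HL.1 HM.1 LcS McS).1.
have [pL oL] := proj_spec HL.1 HL.2 (Rop k x) LcS.
have [pM oM] := proj_spec HM.1 HM.2 (Top k y) McS.
split; first by [].
by case=> l m [/= Ll Mm]; rewrite /sum_ip /= oL // oM // addr0.
Qed.

End DirectSum.

(** * Tensor products with the identity *)

Section TensorIdentity.
Variable R : realType.
Variables (L M H : lmodType R[i]) (ipL : L -> L -> R[i]) (ipM : M -> M -> R[i])
  (ipH : H -> H -> R[i]) (tp : L -> M -> H).
Hypotheses (HL : is_hilbert ipL) (ipM_inner : is_inner ipM)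
  (Htp : is_tensor_product ipL ipM ipH tp).
Variables (n : nat) (Rop : 'I_n -> L -> L) (RI : 'I_n -> H -> H) (Lc : L -> Prop).
Hypotheses (HR : forall k, is_bounded_op ipL (Rop k))
  (HRI : forall k, is_tensor_id ipH tp (Rop k) (RI k))
  (HLc : is_max_comm_space ipL Rop Lc).
Local Notation tensors_Lc := (fun h => exists x y, Lc x /\ h = tp x y).
Local Notation K := (closed_span ipH tensors_Lc).

Let ipH_inner : is_inner ipH. Proof. by case: Htp => -[]. Qed.
Let ipH_complete : forall u, cauchy ipH u -> exists h, converges ipH u h.
Proof. by case: Htp => -[]. Qed.

Lemma tp_lmapl y : is_lmap (tp ^~ y).
Proof. by case: Htp => _ tpl _ _ _ a x x'; apply: tpl. Qed.

Lemma tpDl x x' y : tp (x + x') y = tp x y + tp x' y.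
Proof. by have := lmapD (tp_lmapl y) x x'. Qed.

Lemma tpZl a x y : tp (a *: x) y = a *: tp x y.
Proof. by have := lmapZ (tp_lmapl y) a x. Qed.

Lemma tpBl x x' y : tp (x - x') y = tp x y - tp x' y.
Proof. by have := lmapB (tp_lmapl y) x x'. Qed.

Lemma ip_tp x x' y y' : ipH (tp x y) (tp x' y') = ipL x x' * ipM y y'.
Proof. by case: Htp. Qed.

Lemma sqnorm_tp x y : sqnorm ipH (tp x y) = sqnorm ipL x * sqnorm ipM y.
Proof.
apply: complexI; rewrite -(ip_sqnorm ipH_inner) ip_tp (ip_sqnorm HL.1) (ip_sqnorm ipM_inner).
by rewrite rmorphM.
Qed.

Lemma tp_orth_eq0 z : (forall x y, ipH (tp x y) z = 0) -> z = 0.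
Proof.
move=> hz; apply: (sqnorm_eq0 ipH_inner); apply: complexI; rewrite -(ip_sqnorm ipH_inner).
case: Htp => _ _ _ _ /(_ z) dense.
by apply: (closed_span_ind (closed_subspace_orth ipH_inner z) _ dense) => _ [x [y ->]].
Qed.

Lemma adj_tensor_id k x y : adj ipH (RI k) (tp x y) = tp (adj ipL (Rop k) x) y.
Proof.
apply/eqP; rewrite -subr_eq0; apply/eqP; apply: tp_orth_eq0 => x' y'.
rewrite (ipBr ipH_inner) -(adjP ipH_inner ipH_complete (HRI k).1) (HRI k).2 !ip_tp.
by rewrite -(adjP HL.1 HL.2 (HR k)) subrr.
Qed.

(* The vector [(I (x) y^* ) h] of L, given by the Riesz representation theorem. *)
Definition contract (y : M) (h : H) : L :=
  epsilon (inhabits 0) (fun z => forall x, ipH (tp x y) h = ipL x z).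

Lemma contractP y h x : ipH (tp x y) h = ipL x (contract y h).
Proof.
move: x; apply: (epsilon_spec (inhabits 0) (fun z => forall x, ipH (tp x y) h = ipL x z)).
apply: (riesz HL.1 HL.2).
  by move=> a x x'; rewrite tpDl tpZl (ipDl ipH_inner) (ipZl ipH_inner).
exists (sqnorm ipM y * sqnorm ipH h) => [|x].
  exact: mulr_ge0 (sqnorm_ge0 ipM_inner y) (sqnorm_ge0 ipH_inner h).
apply: le_trans (cauchy_schwarz ipH_inner _ _) _.
by rewrite sqnorm_tp [X in _ <= X]mulrC mulrA.
Qed.

Lemma adj_contract i y h :
  adj ipL (Rop i) (contract y h) = contract y (adj ipH (RI i) h).
Proof.
apply: (ipr_inj HL.1) => x; rewrite -(adjP HL.1 HL.2 (HR i)) -!contractP.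
by rewrite -(HRI i).2 (adjP ipH_inner ipH_complete (HRI i).1).
Qed.

Lemma contract_in_max_comm S y h : comm_admissible ipH RI S -> S h -> Lc (contract y h).
Proof.
move=> [_ Sinv Scomm] Sh; apply: (sub_max_comm_space HL.1 HL.2 HR HLc
  (G := fun a => exists y h, S h /\ a = contract y h)); last by exists y, h.
- move=> i _ [y' [h' [Sh' ->]]]; exists y', (adj ipH (RI i) h').
  by split; [apply: Sinv | apply: adj_contract].
- by move=> i j _ [y' [h' [Sh' ->]]]; rewrite !adj_contract Scomm.
Qed.

Lemma tp_sub_proj_orth x y k : K k -> ipH (tp (x - proj ipL Lc x) y) k = 0.
Proof.
have [[LcS _ _] _] := HLc; have [_ orth] := proj_spec HL.1 HL.2 x LcS.
by apply: (closed_span_orth ipH_inner) => _ [x' [y' [Lx' ->]]]; rewrite ip_tp orth // mul0r.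
Qed.

Lemma comm_admissible_tensor_id : comm_admissible ipH RI K.
Proof.
have [[_ Linv Lcomm] _] := HLc.
apply: (comm_admissible_closed_span ipH_inner ipH_complete (fun k => (HRI k).1)).
- move=> i _ [x [y [Lx ->]]]; rewrite adj_tensor_id.
  by exists (adj ipL (Rop i) x), y; split => //; apply: Linv.
- by move=> i j _ [x [y [Lx ->]]]; rewrite !adj_tensor_id Lcomm.
Qed.

Lemma max_comm_space_tensor_id : is_max_comm_space ipH RI K.
Proof.
split=> [|S hS h Sh]; first exact: comm_admissible_tensor_id.
have [[LcS _ _] _] := HLc.
have [Kp orth] := proj_spec ipH_inner ipH_complete h (closed_span_closed ipH tensors_Lc).
suff : h - proj ipH K h = 0 by move/eqP; rewrite subr_eq0 => /eqP ->.
apply: tp_orth_eq0 => x y; have [Lq orthq] := proj_spec HL.1 HL.2 x LcS.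
set q := proj ipL Lc x in Lq orthq *.
have -> : tp x y = tp q y + tp (x - q) y by rewrite -tpDl addrC subrK.
rewrite (ipDl ipH_inner) (ipC ipH_inner) orth; last by apply: sub_closed_span; exists q, y.
rewrite conjC0 add0r (ipBr ipH_inner) contractP orthq; last exact: contract_in_max_comm hS Sh.
by rewrite tp_sub_proj_orth // subrr.
Qed.

Lemma compress_tensor_id k x y :
  compress ipH K (RI k) (tp x y) = tp (compress ipL Lc (Rop k) x) y.
Proof.
rewrite /compress (HRI k).2; apply: (proj_eq ipH_inner (closed_span_closed ipH tensors_Lc).1).
have [[LcS _ _] _] := HLc; have [Lq _] := proj_spec HL.1 HL.2 (Rop k x) LcS.
split; first by apply: sub_closed_span; exists (proj ipL Lc (Rop k x)), y.
by move=> h Kh; rewrite -tpBl; apply: tp_sub_proj_orth.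
Qed.

End TensorIdentity.

Theorem corollary5 (R : realType) (n : nat)
  (L M : lmodType R[i]) (ipL : L -> L -> R[i]) (ipM : M -> M -> R[i])
  (HL : is_hilbert ipL) (HM : is_hilbert ipM)
  (Rop : 'I_n -> L -> L) (Top : 'I_n -> M -> M)
  (HR : forall k, is_bounded_op ipL (Rop k))
  (HT : forall k, is_bounded_op ipM (Top k))
  (Lc : L -> Prop) (Mc : M -> Prop)
  (HLc : is_max_comm_space ipL Rop Lc)
  (HMc : is_max_comm_space ipM Top Mc)
  (H : lmodType R[i]) (ipH : H -> H -> R[i]) (tp : L -> M -> H)
  (Htp : is_tensor_product ipL ipM ipH tp)
  (RI : 'I_n -> H -> H)
  (HRI : forall k, is_tensor_id ipH tp (Rop k) (RI k)) :
  (* direct sums *)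
  (is_max_comm_space (sum_ip ipL ipM) (fun k => sum_op (Rop k) (Top k))
       (prod_set Lc Mc)
   /\ forall k (x : L) (y : M), Lc x -> Mc y ->
       compress (sum_ip ipL ipM) (prod_set Lc Mc) (sum_op (Rop k) (Top k)) (x, y)
       = sum_op (compress ipL Lc (Rop k)) (compress ipM Mc (Top k)) (x, y))
  /\
  (* tensor products with the identity *)
  (let K := closed_span ipH (fun h => exists x y, Lc x /\ h = tp x y) in
   is_max_comm_space ipH RI K
   /\ forall k (x : L) (y : M), Lc x ->
       compress ipH K (RI k) (tp x y) = tp (compress ipL Lc (Rop k) x) y).
Proof.
split; [split | move=> K; split].
- exact (max_comm_space_sum HL HM HR HT HLc HMc).
- move=> k x y _ _; exact (compress_sum HL HM HLc HMc k x y).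
- exact (max_comm_space_tensor_id HL HM.1 Htp HR HRI HLc).
- move=> k x y _; exact (compress_tensor_id HL Htp HRI HLc k x y).
Qed.
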